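(* Let $\alpha$ be a graph function on a strongly connected digraph $G$. Applying a lowering operation (at any vertex) to $\alpha$ cannot increase the raising imbalance $\rho^R_v$ at any vertex $v$. Symmetrically, applying a raising operation cannot increase the lowering imbalance $\rho^L_v$ at any vertex $v$.
   Context: $G$ is a strongly connected directed graph (self-loops allowed). A graph function assigns a real weight $\alpha_{uv}$ to each edge $(u,v)$. Let $\alpha_v^{\text{in}}=\max_{u:(u,v)\in G}\alpha_{uv}$, $\alpha_v^{\text{out}}=\max_{w:(v,w)\in G}\alpha_{vw}$. A balancing operation at $v$ adds $(\alpha_v^{\text{out}}-\alpha_v^{\text{in}})/2$ to every edge weight $\alpha_{uv}$ with $u\neq v$, subtracts it from every $\alpha_{vw}$ with $w\ne v$, and leaves a self-loop at $v$ unchanged. $\rho_v^R=\max\{0,\alpha_v^{\text{out}}-\alpha_v^{\text{in}}\}$, $\rho_v^L=\max\{0,\alpha_v^{\text{in}}-\alpha_v^{\text{out}}\}$. A raising operation at $v$ performs the balancing operation at $v$ if $\rho^R_v>0$ and nothing otherwise; a lowering operation at $v$ performs it if $\rho^L_v>0$ and nothing otherwise. *)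

From mathcomp Require Import all_boot all_order all_algebra.
Set Implicit Arguments. Unset Strict Implicit. Unset Printing Implicit Defensive.
Import Order.TTheory GRing.Theory Num.Theory.
Local Open Scope ring_scope.

Section GraphFun.
Variables (R : realFieldType) (V : finType) (E : rel V).

Definition strongly_connected : Prop := forall u v : V, connect E u v.

(* maximum of a sequence of reals (0 on the empty sequence; never used on an
   empty sequence for strongly connected graphs with an edge) *)
Definition seqmax (s : seq R) : R := foldr Num.max (head 0 s) s.

Definition alpha_in (a : V -> V -> R) (v : V) : R :=
  seqmax [seq a u v | u <- enum V & E u v].
Definition alpha_out (a : V -> V -> R) (v : V) : R :=
  seqmax [seq a v w | w <- enum V & E v w].

Definition rhoR (a : V -> V -> R) (v : V) : R :=
  Num.max 0 (alpha_out a v - alpha_in a v).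
Definition rhoL (a : V -> V -> R) (v : V) : R :=
  Num.max 0 (alpha_in a v - alpha_out a v).

Definition balance (a : V -> V -> R) (v : V) : V -> V -> R :=
  let d := (alpha_out a v - alpha_in a v) / 2 in
  fun x y => a x y + (if (y == v) && (x != v) then d else 0)
                   - (if (x == v) && (y != v) then d else 0).

Definition raise (a : V -> V -> R) (v : V) : V -> V -> R :=
  if 0 < rhoR a v then balance a v else a.
Definition lower (a : V -> V -> R) (v : V) : V -> V -> R :=
  if 0 < rhoL a v then balance a v else a.
End GraphFun.

(** If [alpha_out v <= alpha_in v], balancing at [v] adds
    [d = (alpha_out v - alpha_in v) / 2 <= 0] to the edges into [v] and [-d] to
    the edges out of [v].  Hence no edge out of a vertex [w] gains more than
    [-d], and none into [w] loses more than [-d], and both only when [w = v].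
    So [alpha_out w - alpha_in w] does not increase for [w != v], while at [v]
    it becomes at most [alpha_out v - alpha_in v - 2 d = 0].  Raising is
    lowering on the converse graph with transposed weights, which exchanges
    [rhoR] and [rhoL]. *)
From mathcomp Require Import all_boot all_order all_algebra.
From mathcomp Require Import lra.
Set Implicit Arguments.
Unset Strict Implicit.
Import Order.TTheory GRing.Theory Num.Theory.
Local Open Scope ring_scope.

Section SeqMax.
Variable R : realFieldType.

Lemma foldr_max_ge (b : R) s x : x \in s -> x <= foldr Num.max b s.
Proof.
elim: s => //= y s IHs; rewrite inE le_max => /predU1P [-> | /IHs ->].
  by rewrite lexx.
by rewrite orbT.
Qed.

Lemma foldr_max_mem (b : R) s : foldr Num.max b s \in b :: s.
Proof.
elim: s => [|y s IHs] /=; first exact: mem_head.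
rewrite maxEle; case: ifP => _; last by rewrite !inE eqxx orbT.
by move: IHs; rewrite !inE => /orP [-> | ->]; rewrite ?orbT.
Qed.

Lemma seqmax_ge (s : seq R) x : x \in s -> x <= seqmax s.
Proof. exact: foldr_max_ge. Qed.

Lemma seqmax_mem (s : seq R) : s != [::] -> seqmax s \in s.
Proof.
case: s => // x s _; have := foldr_max_mem x (x :: s).
by rewrite /seqmax /= !inE orbA orbb.
Qed.

Lemma seqmax_map_le_shift (T : eqType) (s : seq T) (f g : T -> R) (c : R) :
  0 <= c -> {in s, forall x, f x <= g x + c} ->
  seqmax (map f s) <= seqmax (map g s) + c.
Proof.
case: s => [|x0 s] c_ge0 fg; first by rewrite /seqmax /= add0r.
have /mapP [x xs ->] := @seqmax_mem (map f (x0 :: s)) isT.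
by rewrite (le_trans (fg x xs)) // lerD2r seqmax_ge // map_f.
Qed.

End SeqMax.

Section Imbalance.
Variables (R : realFieldType) (V : finType) (E : rel V).
Implicit Types (a c : V -> V -> R) (v w : V).

Lemma alpha_out_le_shift c (c' : V -> V -> R) w k : 0 <= k ->
  (forall y, E w y -> c w y <= c' w y + k) ->
  alpha_out E c w <= alpha_out E c' w + k.
Proof.
move=> k_ge0 le_cc'; apply: seqmax_map_le_shift => // y.
by rewrite mem_filter => /andP [/le_cc'].
Qed.

Lemma alpha_in_le_shift c (c' : V -> V -> R) w k : 0 <= k ->
  (forall x, E x w -> c x w <= c' x w + k) ->
  alpha_in E c w <= alpha_in E c' w + k.
Proof.
move=> k_ge0 le_cc'; apply: seqmax_map_le_shift => // x.
by rewrite mem_filter => /andP [/le_cc'].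
Qed.

Lemma rhoR_eq c (c' : V -> V -> R) w : c =2 c' -> rhoR E c w = rhoR E c' w.
Proof.
move=> ecc'; rewrite /rhoR /alpha_out /alpha_in.
by rewrite (eq_map (ecc' w)) (eq_map (ecc'^~ w)).
Qed.

Lemma rhoR_gt0 a v : (0 < rhoR E a v) = (alpha_in E a v < alpha_out E a v).
Proof. by rewrite /rhoR lt_max ltxx subr_gt0. Qed.

Lemma rhoL_gt0 a v : (0 < rhoL E a v) = (alpha_out E a v < alpha_in E a v).
Proof. by rewrite /rhoL lt_max ltxx subr_gt0. Qed.

End Imbalance.

Section BalanceDown.
Variables (R : realFieldType) (V : finType) (E : rel V) (a : V -> V -> R) (v : V).
Hypothesis out_le_in : alpha_out E a v <= alpha_in E a v.

Let d := (alpha_out E a v - alpha_in E a v) / 2.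
Let d_le0 : d <= 0. Proof. by rewrite /d pmulr_lle0 ?invr_gt0 ?ltr0n // subr_le0. Qed.

Lemma balance_le_out x y :
  balance E a v x y <= a x y + (if x == v then - d else 0).
Proof.
by rewrite /balance -/d; have := d_le0; case: (x == v); case: (y == v) => /=; lra.
Qed.

Lemma balance_ge_in x y :
  a x y <= balance E a v x y + (if y == v then - d else 0).
Proof.
by rewrite /balance -/d; have := d_le0; case: (x == v); case: (y == v) => /=; lra.
Qed.

Lemma rhoR_balance_le w : rhoR E (balance E a v) w <= rhoR E a w.
Proof.
set k := if w == v then - d else 0.
have k_ge0 : 0 <= k by rewrite /k; case: ifP; rewrite ?oppr_ge0.
have out_le : alpha_out E (balance E a v) w <= alpha_out E a w + k.
  by apply: alpha_out_le_shift => // y _; apply: balance_le_out.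
have in_ge : alpha_in E a w <= alpha_in E (balance E a v) w + k.
  by apply: alpha_in_le_shift => // x _; apply: balance_ge_in.
rewrite /rhoR ge_max le_max lexx /= le_max; apply/orP.
move: out_le in_ge; rewrite /k; case: eqP => [-> | _] out_le in_ge.
  by left; rewrite /d in out_le in_ge; lra.
by right; lra.
Qed.

End BalanceDown.

Section Converse.
Variables (R : realFieldType) (V : finType).

Definition converse {T : Type} (f : V -> V -> T) : V -> V -> T := fun x y => f y x.

Variable E : rel V.

Lemma rhoR_converse (c : V -> V -> R) w :
  rhoR (converse E) (converse c) w = rhoL E c w.
Proof. by []. Qed.

Variables (a : V -> V -> R) (v : V).

Lemma balance_converse :
  balance (converse E) (converse a) v =2 converse (balance E a v).
Proof.
move=> x y; rewrite /balance /converse /alpha_in /alpha_out /=.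
by case: (x == v); case: (y == v) => /=; lra.
Qed.

Lemma rhoL_balance_le w : alpha_in E a v <= alpha_out E a v ->
  rhoL E (balance E a v) w <= rhoL E a w.
Proof.
move=> in_le_out; rewrite -!rhoR_converse -(rhoR_eq _ _ balance_converse).
exact: rhoR_balance_le.
Qed.

End Converse.

Theorem proposition1 (R : realFieldType) (V : finType) (E : rel V)
  (a : V -> V -> R) :
  strongly_connected E ->
  (forall v w : V, rhoR E (lower E a v) w <= rhoR E a w) /\
  (forall v w : V, rhoL E (raise E a v) w <= rhoL E a w).
Proof.
move=> _; split=> v w.
- rewrite /lower rhoL_gt0; case: ifP => [/ltW out_le_in | _]; last exact: lexx.
  exact: rhoR_balance_le.
- rewrite /raise rhoR_gt0; case: ifP => [/ltW in_le_out | _]; last exact: lexx.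
  exact: rhoL_balance_le.
Qed.
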